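(* Let $n\ge2$, $0\le\delta<\frac1n$, let $P^0=[d_1\ \cdots\ d_{n+1}]$ be the canonical uniform simplex, and let $P^\delta=[d_1^\delta\ \cdots\ d^\delta_{n+1}]$ with $d_1^\delta=d_1$ and $d_i^\delta=\alpha(d_i+\delta e_1)$ for $2\le i\le n+1$, where $$\alpha=\frac{n}{\sqrt{n^2\delta^2-2n\delta+n^2}},\qquad \beta=\alpha^2\left(\frac{n\delta^2-2\delta-1}{n}\right),\qquad \gamma=-\alpha(1-\delta n)-(n-1).$$ Then: (i) $\alpha=\frac{1}{\|d_i+\delta e_1\|}$ for all $i\in\{2,\dots,n+1\}$; (ii) $\beta=(d_j^\delta)^\top d_k^\delta$ for all $2\le j,k\le n+1$ with $j\ne k$; (iii) $\beta\le-\frac1n$ and $1+\frac{\beta n}{1-\beta}>0$; (iv) $-n\le\gamma<0$.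
   Context: The canonical uniform simplex is the $n\times(n+1)$ matrix $P^0$ defined as follows, with $a_i=\sqrt{\frac{(n-i+1)(n+1)}{n(n-i+2)}}$ for $i=1,\dots,n$: for $1\le j\le n$, column $j$ has entry $-\frac{a_i}{n-i+1}$ in row $i<j$, entry $a_j$ in row $j$, and $0$ in rows $i>j$; column $n+1$ has entry $-\frac{a_i}{n-i+1}$ in every row $i$. $e_1$ is the first standard basis vector. *)

From HB Require Import structures.
From mathcomp Require Import all_boot all_order all_algebra.
Set Implicit Arguments. Unset Strict Implicit. Unset Printing Implicit Defensive.
Import Order.TTheory GRing.Theory Num.Theory.
Local Open Scope ring_scope.

Section Simplex.
Variable R : rcfType.

Definition dotv (m : nat) (u v : 'cV[R]_m) : R := (u^T *m v) 0 0.
Definition normv (m : nat) (v : 'cV[R]_m) : R := Num.sqrt (dotv v v).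

(* a_i of the paper, with 0-based index i (paper index i+1):
   a_{i+1} = sqrt((n-i)(n+1) / (n(n-i+1))). *)
Definition simplex_a (n i : nat) : R :=
  Num.sqrt (((n - i)%:R * (n.+1)%:R) / (n%:R * (n - i).+1%:R)).

Definition P0 (n : nat) : 'M[R]_(n, n.+1) :=
  \matrix_(i < n, j < n.+1)
    if (j < n)%N then
      (if (i < j)%N then - simplex_a n i / (n - i)%:R
       else if (i == j :> nat) then simplex_a n i else 0)
    else - simplex_a n i / (n - i)%:R.

(* d_{j+1} = column j of P^0 *)
Definition dcol (n : nat) (j : 'I_n.+1) : 'cV[R]_n := col j (P0 n).

Definition e1 (n : nat) : 'cV[R]_n := \col_(i < n) ((i == 0 :> nat)%:R).

Definition alpha (n : nat) (delta : R) : R :=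
  n%:R / Num.sqrt (n%:R ^+ 2 * delta ^+ 2 - 2 * n%:R * delta + n%:R ^+ 2).

Definition beta (n : nat) (delta : R) : R :=
  alpha n delta ^+ 2 * ((n%:R * delta ^+ 2 - 2 * delta - 1) / n%:R).

Definition gamma (n : nat) (delta : R) : R :=
  - alpha n delta * (1 - delta * n%:R) - (n%:R - 1).

Definition Pdelta (n : nat) (delta : R) : 'M[R]_(n, n.+1) :=
  \matrix_(i < n, j < n.+1)
    if (j == 0 :> nat) then @dcol n j i 0
    else alpha n delta * (@dcol n j i 0 + delta * e1 n i 0).

Definition ddelta (n : nat) (delta : R) (j : 'I_n.+1) : 'cV[R]_n :=
  col j (Pdelta n delta).

End Simplex.
Arguments alpha {R} n delta.
Arguments beta {R} n delta.
Arguments gamma {R} n delta.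
Arguments Pdelta {R} n delta.
Arguments ddelta {R} n delta j.
Arguments dcol {R} n j.
Arguments e1 {R} n.
Arguments simplex_a {R} n i.
Arguments P0 {R} n.

From HB Require Import structures.
From mathcomp Require Import all_boot all_order all_algebra.
From mathcomp Require Import ring lra.
Import Order.TTheory GRing.Theory Num.Theory.
Local Open Scope ring_scope.

(* The columns of P^0 are unit vectors with pairwise inner products -1/n, and
   the first coordinate of every column d_j, j >= 2, is -1/n.  Hence the
   Gram matrix of the shifted columns d_j + delta e_1 only involves the two
   numbers 1 - 2 delta/n + delta^2 (diagonal) and -1/n - 2 delta/n + delta^2
   (off-diagonal), and (i)-(iv) reduce to polynomial inequalities in delta
   and n on the range 0 <= delta n < 1. *)

Section InnerProduct.
Variables (R : rcfType) (m : nat).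
Implicit Types (u v w : 'cV[R]_m) (c : R).

Lemma dotvE u v : dotv u v = \sum_(i < m) u i 0 * v i 0.
Proof. by rewrite /dotv !mxE; apply: eq_bigr => i _; rewrite mxE. Qed.

Lemma dotvC u v : dotv u v = dotv v u.
Proof. by rewrite !dotvE; apply: eq_bigr => i _; rewrite mulrC. Qed.

Lemma dotvZZ c u v : dotv (c *: u) (c *: v) = c ^+ 2 * dotv u v.
Proof. by rewrite !dotvE mulr_sumr; apply: eq_bigr => i _; rewrite !mxE; ring. Qed.

Lemma dotv_addZ c u v w :
  dotv (u + c *: w) (v + c *: w)
  = dotv u v + c * (dotv u w + dotv v w) + c ^+ 2 * dotv w w.
Proof.
rewrite !dotvE -big_split /= !mulr_sumr -!big_split /=.
by apply: eq_bigr => i _; rewrite !mxE; ring.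
Qed.

Lemma dotv_e1 (m_gt0 : (0 < m)%N) u : dotv u (e1 m) = u (Ordinal m_gt0) 0.
Proof.
rewrite dotvE (bigD1 (Ordinal m_gt0)) //= mxE mulr1 big1 ?addr0 // => i ne_i0.
rewrite mxE; case: eqP => [i0|_]; last by rewrite mulr0.
by case/eqP: ne_i0; apply: val_inj.
Qed.

End InnerProduct.

Lemma sum_lower_pivot (R : nmodType) (f g : nat -> R) (j n : nat) : (j < n)%N ->
  \sum_(i < n) (if (i < j)%N then f i else if i == j :> nat then g i else 0)
  = \sum_(0 <= i < j) f i + g j.
Proof.
move=> lt_jn; rewrite -(big_mkord xpredT (fun i =>
  if (i < j)%N then f i else if i == j then g i else 0)).
rewrite (big_cat_nat (n := j)) ?(ltnW lt_jn) // /= (big_ltn lt_jn) ltnn eqxx.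
rewrite [X in _ + (_ + X)]big1_seq ?addr0; last first.
  move=> i /andP[_]; rewrite mem_index_iota => /andP[lt_ji _].
  by rewrite ltnNge (ltnW lt_ji) gtn_eqF.
congr (_ + _); rewrite big_nat_cond [RHS]big_nat_cond.
by apply: eq_bigr => i /andP[/andP[_ ->]].
Qed.

Section UniformSimplex.
Variables (R : rcfType) (n : nat).
Hypothesis n_gt0 : (0 < n)%N.
Local Notation N := (n%:R : R).

Lemma natn_neq0 : N != 0.
Proof. by rewrite pnatr_eq0 -lt0n. Qed.

Lemma simplex_a_sqr i :
  simplex_a n i ^+ 2 = (n - i)%:R * n.+1%:R / (N * (n - i).+1%:R) :> R.
Proof. by rewrite sqr_sqrtr // divr_ge0 // mulr_ge0. Qed.

Lemma simplex_a0 : simplex_a n 0 = 1 :> R.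
Proof. by rewrite /simplex_a subn0 mulfV ?sqrtr1 // mulf_neq0 ?natn_neq0 ?pnatr_eq0. Qed.

(* Each term equals (n+1)/n * (1/(n-i) - 1/(n-i+1)), so the sum telescopes. *)
Lemma sum_simplex_tail_sqr j : (j <= n)%N ->
  \sum_(0 <= i < j) (simplex_a n i / (n - i)%:R) ^+ 2
  = n.+1%:R / (N * (n - j).+1%:R) - 1 / N :> R.
Proof.
have n_ge1 : 1 <= N by rewrite ler1n.
elim: j => [_|j IHj le_jn].
  rewrite big_nil subn0 -!natr1; field.
  by rewrite natn_neq0 /=; apply/lt0r_neq0; lra.
have le_j1n : j%:R + 1 <= N by rewrite natr1 ler_nat.
rewrite big_nat_recr //= IHj ?(ltnW le_jn) // expr_div_n simplex_a_sqr.
rewrite subnSK // -!natr1 !natrB ?(ltnW le_jn) //.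
field; rewrite natn_neq0 /=.
by apply/andP; split; apply/lt0r_neq0; lra.
Qed.

Lemma dcolE (j : 'I_n.+1) (i : 'I_n) : dcol n j i 0 =
  if (j < n)%N then
    (if (i < j)%N then - (simplex_a n i / (n - i)%:R)
     else if i == j :> nat then simplex_a n i else 0)
  else - (simplex_a n i / (n - i)%:R) :> R.
Proof. by rewrite !mxE mulNr. Qed.

Lemma dotv_dcolxx (j : 'I_n.+1) : dotv (dcol n j) (dcol n j) = 1 :> R.
Proof.
rewrite dotvE; have [lt_jn|le_nj] := ltnP j n.
  rewrite (eq_bigr (fun i : 'I_n =>
    if (i < j)%N then (simplex_a n i / (n - i)%:R) ^+ 2
    else if i == j :> nat then simplex_a n i ^+ 2 else 0)); last first.
    move=> i _; rewrite dcolE lt_jn; case: ltnP => _; first by rewrite mulrNN expr2.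
    by case: eqP; rewrite ?mul0r ?expr2.
  rewrite (@sum_lower_pivot R (fun i => (simplex_a n i / (n - i)%:R) ^+ 2)
    (fun i => simplex_a n i ^+ 2)) //.
  rewrite sum_simplex_tail_sqr ?(ltnW lt_jn) // simplex_a_sqr.
  have le_j1n : j%:R + 1 <= N by rewrite natr1 ler_nat.
  rewrite -!natr1 natrB ?(ltnW lt_jn) //; field.
  by rewrite natn_neq0 andbT; apply/lt0r_neq0; lra.
rewrite (eq_bigr (fun i : 'I_n => (simplex_a n i / (n - i)%:R) ^+ 2)); last first.
  by move=> i _; rewrite dcolE ltnNge le_nj mulrNN expr2.
rewrite -(big_mkord xpredT (fun i => (simplex_a n i / (n - i)%:R) ^+ 2)).
by rewrite sum_simplex_tail_sqr // subnn; field; apply: natn_neq0.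
Qed.

Lemma dotv_dcol_lt (j k : 'I_n.+1) : (j < k)%N ->
  dotv (dcol n j) (dcol n k) = - 1 / N.
Proof.
move=> lt_jk; have lt_jn : (j < n)%N by exact: leq_trans lt_jk (ltn_ord k).
rewrite dotvE (eq_bigr (fun i : 'I_n =>
  if (i < j)%N then (simplex_a n i / (n - i)%:R) ^+ 2
  else if i == j :> nat then - (simplex_a n i ^+ 2 / (n - i)%:R) else 0)).
  rewrite (@sum_lower_pivot R (fun i => (simplex_a n i / (n - i)%:R) ^+ 2)
    (fun i => - (simplex_a n i ^+ 2 / (n - i)%:R))) //.
  rewrite sum_simplex_tail_sqr ?(ltnW lt_jn) // simplex_a_sqr.
  have le_j1n : j%:R + 1 <= N by rewrite natr1 ler_nat.
  rewrite -!natr1 !natrB ?(ltnW lt_jn) //; field.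
  by rewrite natn_neq0 /=; apply/andP; split; apply/lt0r_neq0; lra.
move=> i _; rewrite !dcolE lt_jn; case: ltnP => [lt_ij|_].
  by rewrite (ltn_trans lt_ij lt_jk); case: (k < n)%N; rewrite mulrNN expr2.
case: eqP => [eq_ij|_]; last by rewrite mul0r.
by rewrite eq_ij lt_jk; case: (k < n)%N; rewrite mulrN expr2 mulrA.
Qed.

Lemma dotv_dcol (j k : 'I_n.+1) : j != k -> dotv (dcol n j) (dcol n k) = - 1 / N.
Proof.
case: (ltngtP j k) => [lt_jk|lt_kj|/val_inj->]; last by rewrite eqxx.
- by rewrite dotv_dcol_lt.
- by rewrite dotvC dotv_dcol_lt.
Qed.

Lemma dotv_dcol_e1 (j : 'I_n.+1) : (1 <= j)%N -> dotv (dcol n j) (e1 n) = - 1 / N.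
Proof.
by move=> j_ge1; rewrite dotv_e1 dcolE /= j_ge1 simplex_a0 subn0 mulNr; case: ifP.
Qed.

Lemma dotv_dcol_shift (j k : 'I_n.+1) (c : R) : (1 <= j)%N -> (1 <= k)%N ->
  dotv (dcol n j + c *: e1 n) (dcol n k + c *: e1 n)
  = dotv (dcol n j) (dcol n k) - 2 * c / N + c ^+ 2.
Proof.
move=> j_ge1 k_ge1.
rewrite dotv_addZ !dotv_dcol_e1 // dotv_e1 mxE /=.
by field; apply: natn_neq0.
Qed.

Lemma ddeltaE (delta : R) (j : 'I_n.+1) : (1 <= j)%N ->
  ddelta n delta j = alpha n delta *: (dcol n j + delta *: e1 n).
Proof. by move=> j_ge1; apply/matrixP => i k; rewrite !mxE eqn0Ngt j_ge1. Qed.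

End UniformSimplex.

Section SimplexParameters.
Variables (R : rcfType) (n : nat) (delta : R).
Hypothesis n_ge2 : (2 <= n)%N.
Local Notation N := (n%:R : R).
Local Notation D := (N ^+ 2 * delta ^+ 2 - 2 * N * delta + N ^+ 2).

Lemma natn_ge2 : 2 <= N.
Proof. by rewrite (ler_nat R 2). Qed.

Lemma natn_gt0 : 0 < N.
Proof. exact: lt_le_trans natn_ge2. Qed.

Lemma simplex_disc_gt0 : 0 < D.
Proof. have := natn_ge2; have := sqr_ge0 (N * delta - 1); nra. Qed.

Lemma alpha_gt0 : 0 < alpha n delta.
Proof. by rewrite divr_gt0 ?sqrtr_gt0 ?simplex_disc_gt0 // natn_gt0. Qed.

Lemma alpha_sqr : alpha n delta ^+ 2 * D = N ^+ 2.
Proof.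
have D_gt0 := simplex_disc_gt0.
by rewrite expr_div_n sqr_sqrtr ?ltW // mulfVK ?gt_eqF.
Qed.

Lemma alphaE : alpha n delta = 1 / Num.sqrt (1 - 2 * delta / N + delta ^+ 2).
Proof.
have N_gt0 := natn_gt0.
have -> : 1 - 2 * delta / N + delta ^+ 2 = (Num.sqrt D / N) ^+ 2.
  by rewrite expr_div_n sqr_sqrtr ?ltW ?simplex_disc_gt0 //; field; rewrite gt_eqF.
rewrite sqrtr_sqr ger0_norm ?divr_ge0 ?sqrtr_ge0 ?ltW //.
by rewrite /alpha invf_div mul1r.
Qed.

Lemma betaE : beta n delta = alpha n delta ^+ 2 * (- 1 / N - 2 * delta / N + delta ^+ 2).
Proof. by rewrite /beta; congr (_ * _); field; rewrite gt_eqF // natn_gt0. Qed.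

Lemma beta_mul_disc : beta n delta * D = N * (N * delta ^+ 2 - 2 * delta - 1).
Proof.
rewrite /beta mulrAC alpha_sqr; field.
by rewrite gt_eqF // natn_gt0.
Qed.

Hypotheses (delta_ge0 : 0 <= delta) (delta_lt : delta < 1 / N).

Lemma delta_mul_lt1 : delta * N < 1.
Proof. by rewrite -ltr_pdivlMr // natn_gt0. Qed.

(* Multiplying by D: beta n D = - D - n delta (n + 1) (2 - n delta). *)
Lemma beta_mul_le : beta n delta * N <= -1.
Proof.
have D_gt0 := simplex_disc_gt0; have N_ge2 := natn_ge2; have dN := delta_mul_lt1.
rewrite -(ler_pM2r D_gt0) mulrAC beta_mul_disc mulN1r.
have : 0 <= delta * N * (N + 1) * (2 - delta * N) by rewrite !mulr_ge0 //; lra.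
nra.
Qed.

Lemma beta_le : beta n delta <= - (1 / N).
Proof. by rewrite -(ler_pM2r natn_gt0) mulNr mul1r mulVf ?gt_eqF ?natn_gt0 ?beta_mul_le. Qed.

(* (1 - beta + beta n) D = n (n delta - 1)^2. *)
Lemma one_add_beta_gt0 : 0 < 1 + beta n delta * N / (1 - beta n delta).
Proof.
have D_gt0 := simplex_disc_gt0; have N_ge2 := natn_ge2; have dN := delta_mul_lt1.
have b_lt0 : beta n delta < 0.
  by apply: le_lt_trans beta_le _; rewrite oppr_lt0 divr_gt0 //; lra.
have -> : 1 + beta n delta * N / (1 - beta n delta)
          = (1 - beta n delta + beta n delta * N) / (1 - beta n delta).
  by field; rewrite gt_eqF //; lra.
apply: divr_gt0; last lra.
rewrite -(pmulr_lgt0 _ D_gt0).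
have -> : (1 - beta n delta + beta n delta * N) * D
          = D + (N - 1) * (beta n delta * D) by ring.
rewrite beta_mul_disc.
have : 0 < N * (1 - delta * N) ^+ 2 by rewrite mulr_gt0 ?exprn_gt0 //; lra.
nra.
Qed.

(* D - (n (1 - n delta))^2 = n delta (n^2 - 1) (2 - n delta). *)
Lemma alpha_mul_le1 : alpha n delta * (1 - delta * N) <= 1.
Proof.
have D_gt0 := simplex_disc_gt0; have N_ge2 := natn_ge2; have dN := delta_mul_lt1.
have N_mul_ge0 : 0 <= N * (1 - delta * N) by rewrite mulr_ge0 //; lra.
rewrite /alpha mulrAC ler_pdivrMr ?sqrtr_gt0 // mul1r.
rewrite -(ger0_norm N_mul_ge0) -sqrtr_sqr ler_wsqrtr //.
have : 0 <= delta * N * (N ^+ 2 - 1) * (2 - delta * N) by rewrite !mulr_ge0 //; nra.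
nra.
Qed.

Lemma gamma_ge : - N <= gamma n delta.
Proof. by rewrite /gamma; have := alpha_mul_le1; lra. Qed.

Lemma gamma_lt0 : gamma n delta < 0.
Proof.
have N_ge2 := natn_ge2; have dN := delta_mul_lt1.
have : 0 < alpha n delta * (1 - delta * N) by rewrite mulr_gt0 ?alpha_gt0 //; lra.
by rewrite /gamma; lra.
Qed.

End SimplexParameters.

Theorem lemma9 (R : rcfType) (n : nat) (delta : R) :
  (2 <= n)%N -> 0 <= delta -> delta < 1 / n%:R ->
  [/\ (forall i : 'I_n.+1, (1 <= i)%N ->
         alpha n delta = 1 / normv (dcol n i + delta *: e1 n)),
      (forall j k : 'I_n.+1, (1 <= j)%N -> (1 <= k)%N -> j != k ->
         beta n delta = dotv (ddelta n delta j) (ddelta n delta k)),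
      beta n delta <= - (1 / n%:R) /\
        0 < 1 + beta n delta * n%:R / (1 - beta n delta)
    & - n%:R <= gamma n delta /\ gamma n delta < 0].
Proof.
move=> n_ge2 delta_ge0 delta_lt; have n_gt0 := ltnW n_ge2.
split.
- move=> i i_ge1.
  by rewrite /normv dotv_dcol_shift // dotv_dcolxx // alphaE.
- move=> j k j_ge1 k_ge1 ne_jk.
  by rewrite !ddeltaE // dotvZZ dotv_dcol_shift // dotv_dcol // betaE.
- by split; [apply: beta_le | apply: one_add_beta_gt0].
- by split; [apply: gamma_ge | apply: gamma_lt0].
Qed.
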